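(* For all integers $0 <k \leq \ell <n$, \[ \begin{aligned} D(n-k,k)\, D(n-\ell,\ell) &\geq D(n-k+1,k-1)\, D(n-\ell-1,\ell+1), \\ D(n-k,k)\, D(n-\ell,\ell) &\geq D(n-k,k-1)\, D(n-\ell,\ell+1). \end{aligned} \]
   Context: For non-negative integers $m,n$, the Delannoy number $D(m,n)$ is the number of lattice paths from $(0,0)$ to $(m,n)$ using only steps from $(i,j)$ to $(i+1,j)$, $(i,j+1)$ or $(i+1,j+1)$. *)

From mathcomp Require Import all_boot.

(* Delannoy number D(m,n): number of lattice paths from (0,0) to (m,n) with
   steps (1,0), (0,1), (1,1). *)
Fixpoint delannoy (m : nat) : nat -> nat :=
  match m with
  | 0 => fun _ => 1
  | m'.+1 =>
      fix dn (n : nat) : nat :=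
        match n with
        | 0 => 1
        | n'.+1 => delannoy m' n'.+1 + dn n' + delannoy m' n'
        end
  end.

From mathcomp Require Import all_boot.
From mathcomp Require Import zify.

(* Row m+1 of the Delannoy array is obtained from row m by taking partial
   sums and then adding consecutive terms (its generating function is
   multiplied by (1 + x) / (1 - x)); both operations preserve log-concavity
   of positive sequences, so every row is log-concave, and the same
   partial-sum estimate shows that D(m, j+1) / D(m, j) increases with m.
   Together with the symmetry D(m, n) = D(n, m) this yields log-concavity
   along antidiagonals, and both inequalities are then chains of comparisons
   of ratios. *)

Set Implicit Arguments.
Unset Strict Implicit.
Unset Printing Implicit Defensive.

Definition log_concave (f : nat -> nat) :=
  forall n, f n * f n.+2 <= f n.+1 * f n.+1.

Definition partial_sum (f : nat -> nat) n := \sum_(i < n) f i.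

Lemma leq_ratio_trans x y z w u v :
  0 < w -> x * w <= z * y -> z * v <= u * w -> x * v <= u * y.
Proof.
move=> w_gt0 xz zu; rewrite -(leq_pmul2r w_gt0).
apply: (@leq_trans (z * y * v)); first by rewrite mulnAC leq_mul2r xz orbT.
by rewrite mulnAC [u * y * w]mulnAC leq_mul2r zu orbT.
Qed.

Lemma nondecreasing_ratio (a b : nat -> nat) i j :
  (forall t, 0 < b t) ->
  (forall t, i <= t < j -> a t * b t.+1 <= a t.+1 * b t) ->
  i <= j -> a i * b j <= a j * b i.
Proof.
move=> b_gt0; elim: j => [|j IHj] step; first by rewrite leqn0 => /eqP->.
rewrite leq_eqVlt ltnS => /orP[/eqP-> // | le_ij].
apply: (leq_ratio_trans (b_gt0 j)); last by apply: step; rewrite le_ij /=.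
by apply: IHj => // t /andP[le_it lt_tj]; apply: step; rewrite le_it ltnW.
Qed.

Lemma log_concave_ratio_le f i j :
  (forall n, 0 < f n) -> log_concave f -> i <= j ->
  f i * f j.+1 <= f i.+1 * f j.
Proof.
move=> f_gt0 f_lc le_ij; rewrite [X in _ <= X]mulnC.
exact: (@nondecreasing_ratio f (fun t => f t.+1)).
Qed.

Lemma log_concave_add_shift u :
  (forall n, 0 < u n.+1) -> log_concave u ->
  log_concave (fun n => u n.+1 + u n).
Proof.
move=> u_gt0 u_lc n.
have u03 : u n * u n.+3 <= u n.+1 * u n.+2.
  rewrite [X in _ <= X]mulnC.
  by apply: (@nondecreasing_ratio u (fun t => u t.+1)) => //; rewrite leqW.
rewrite !mulnDl !mulnDr; apply: leq_add; apply: leq_add => //.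
by rewrite mulnC.
Qed.

Section PartialSums.

Variable f : nat -> nat.
Hypothesis f_gt0 : forall n, 0 < f n.
Hypothesis f_lc : log_concave f.

(* Termwise, f i / f n <= f (i + 1) / f (n + 1) for i < n. *)
Lemma partial_sum_ratio_le n :
  partial_sum f n * f n.+1 <= partial_sum f n.+1 * f n.
Proof.
rewrite /partial_sum big_ord_recl big_distrl [X in _ <= X]mulnDl /=.
rewrite (leq_trans _ (leq_addl _ _)) // big_distrl leq_sum // => i _.
exact: log_concave_ratio_le (ltnW (ltn_ord i)).
Qed.

Lemma log_concave_partial_sum : log_concave (partial_sum f).
Proof.
move=> n; have key := partial_sum_ratio_le n.
rewrite /partial_sum !big_ord_recr /= -/(partial_sum f n) in key *.
by rewrite mulnDr [X in _ <= X]mulnDr [partial_sum f n * (_ + _)]mulnC leq_add2l.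
Qed.

Lemma partial_sumS_ratio_le n :
  f n.+1 * partial_sum f n.+1 <= f n * partial_sum f n.+2.
Proof.
have key := partial_sum_ratio_le n.
rewrite /partial_sum !big_ord_recr /= -/(partial_sum f n) in key *.
rewrite mulnDr [X in _ <= X]mulnDr [f n.+1 * f n]mulnC leq_add2r.
by rewrite mulnC [X in _ <= X]mulnC.
Qed.

Lemma log_concave_partial_sum_add_shift :
  log_concave (fun n => partial_sum f n.+1 + partial_sum f n).
Proof.
apply: log_concave_add_shift log_concave_partial_sum => n.
by rewrite /partial_sum big_ord_recl addn_gt0 f_gt0.
Qed.

Lemma partial_sum_add_shift_ratio_le n :
  f n.+1 * (partial_sum f n.+1 + partial_sum f n)
    <= f n * (partial_sum f n.+2 + partial_sum f n.+1).
Proof.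
rewrite !mulnDr leq_add ?partial_sumS_ratio_le //.
by rewrite mulnC [X in _ <= X]mulnC partial_sum_ratio_le.
Qed.

End PartialSums.

Notation D := delannoy.

Lemma delannoySS m n : D m.+1 n.+1 = D m n.+1 + D m.+1 n + D m n.
Proof. by []. Qed.

Lemma delannoyn0 m : D m 0 = 1.
Proof. by case: m. Qed.

Lemma delannoy_gt0 m n : 0 < D m n.
Proof.
elim: m n => [|m IHm] [|n] //.
by rewrite delannoySS !addn_gt0 IHm.
Qed.

Lemma delannoyC m n : D m n = D n m.
Proof.
elim: m n => [|m IHm] n; first by rewrite delannoyn0.
elim: n => [|n IHn]; first by rewrite delannoyn0.
by rewrite !delannoySS IHn !IHm [D n.+1 m + _]addnC.
Qed.

Lemma delannoyS_partial_sum m n :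
  D m.+1 n = partial_sum (D m) n.+1 + partial_sum (D m) n.
Proof.
elim: n => [|n IHn]; first by rewrite /partial_sum big_ord1 big_ord0 !delannoyn0.
by rewrite delannoySS IHn /partial_sum !big_ord_recr /=; lia.
Qed.

Lemma log_concave_delannoy m : log_concave (D m).
Proof.
elim: m => [|m IHm] n //; rewrite !delannoyS_partial_sum.
exact: log_concave_partial_sum_add_shift (delannoy_gt0 m) IHm n.
Qed.

Lemma delannoy_ratio_leS m j : D m j.+1 * D m.+1 j <= D m j * D m.+1 j.+1.
Proof.
rewrite !delannoyS_partial_sum.
exact: partial_sum_add_shift_ratio_le (delannoy_gt0 m) (log_concave_delannoy m) j.
Qed.

Lemma delannoy_ratio_le m m' j :
  m <= m' -> D m j.+1 * D m' j <= D m j * D m' j.+1.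
Proof.
move=> le_mm'; rewrite [X in _ <= X]mulnC.
apply: (@nondecreasing_ratio (D^~ j.+1) (D^~ j)) => // [t|t _].
  exact: delannoy_gt0.
by rewrite [X in _ <= X]mulnC delannoy_ratio_leS.
Qed.

(* Multiply the two mixed ratio comparisons around D(p+1, t+1) with
   log-concavity of its row and of its column (by symmetry). *)
Lemma log_concave_delannoy_antidiag p t :
  D p.+2 t * D p t.+2 <= D p.+1 t.+1 * D p.+1 t.+1.
Proof.
set c := D p.+1 t.+1.
have h1 : D p.+2 t * c <= D p.+1 t * D p.+2 t.+1.
  by rewrite mulnC delannoy_ratio_leS.
have h2 : D p t.+2 * c <= D p t.+1 * D p.+1 t.+2 by exact: delannoy_ratio_leS.
have row : D p.+1 t * D p.+1 t.+2 <= c * c by exact: log_concave_delannoy.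
have col : D p.+2 t.+1 * D p t.+1 <= c * c.
  by rewrite mulnC /c ![D _ t.+1]delannoyC log_concave_delannoy.
have c2_gt0 : 0 < c * c by rewrite muln_gt0 delannoy_gt0.
rewrite -(leq_pmul2r c2_gt0) mulnACA (leq_trans (leq_mul h1 h2)) //.
by rewrite [X in X <= _](AC (2*2) ((1*4)*(2*3))) leq_mul.
Qed.

Theorem corollary6p3 (n k l : nat) :
  0 < k -> k <= l -> l < n ->
  delannoy (n - k).+1 k.-1 * delannoy (n - l).-1 l.+1
    <= delannoy (n - k) k * delannoy (n - l) l /\
  delannoy (n - k) k.-1 * delannoy (n - l) l.+1
    <= delannoy (n - k) k * delannoy (n - l) l.
Proof.
case: k => [|k] // _ lt_kl lt_ln; rewrite succnK.
have lt_kn : k < n by lia.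
split.
  rewrite subnSK // -subnS [X in _ <= X]mulnC.
  apply: (@nondecreasing_ratio (fun t => D (n - t) t) (fun t => D (n - t.+1) t.+1));
    [by move=> t; exact: delannoy_gt0 | move=> t /andP[_ lt_tl] | exact: ltnW].
  have -> : n - t = (n - t.+2).+2 by lia.
  have -> : n - t.+1 = (n - t.+2).+1 by lia.
  exact: log_concave_delannoy_antidiag.
set a := n - k.+1; set b := n - l.
have le_ba : b <= a by rewrite /a /b; lia.
rewrite [X in _ <= X]mulnC; apply: (@leq_ratio_trans _ _ (D b k) (D b k.+1)).
- exact: delannoy_gt0.
- by rewrite mulnC; exact: delannoy_ratio_le k le_ba.
- rewrite [X in _ <= X]mulnC.
  exact: log_concave_ratio_le (delannoy_gt0 b) (log_concave_delannoy b) (ltnW lt_kl).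
Qed.
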